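(* rATL is strictly more expressive than ATL, in the following sense: (i) for every ATL formula $\varphi$ there is an rATL formula $\varphi^\star$ such that for every concurrent game structure $\mathcal{S}$ and every state $s$, $V(s,\varphi^\star)=1111$ iff $\mathcal{S},s\models\varphi$; and (ii) there exist an rATL formula $\psi$ and a truth value $u\in\mathbb{B}_4$ (e.g. $\psi=\langle\!\langle A\rangle\!\rangle\dot\Box p$ and $u=0011$) such that there is no ATL formula $\chi$ with $\mathcal{S},s\models\chi\iff V(s,\psi)\succeq u$ for all concurrent game structures $\mathcal{S}$ and states $s$.
   Context: Fix a finite set $\mathrm{AP}$ of atomic propositions. A concurrent game structure (CGS) is a tuple $\mathcal{S}=(St,Ag,Ac,\delta,\ell)$ where $St$ is a finite set of states, $Ag$ a finite set of agents, $Ac$ a finite set of actions, $\ell:St\to 2^{\mathrm{AP}}$ a labeling, and $\delta:St\times AV\to St$ a transition function, where $AV$ is the set of action vectors for $Ag$ (an action vector for $A\subseteq Ag$ is a map $A\to Ac$). A state $s'$ is a successor of $s$ if $s'=\delta(s,v)$ for some $v\in AV$. A path is an infinite sequence $\pi=s_0s_1s_2\cdots$ of states with $s_{n+1}$ a successor of $s_n$ for all $n$; write $\pi[n]=s_n$. A strategy for an agent is a function $f:St^+\to Ac$. For $A\subseteq Ag$ and a set $F_A=\{f_a\mid a\in A\}$ of strategies, one for each agent in $A$, $out(s,F_A)$ is the set of paths $s_0s_1\cdots$ with $s_0=s$ such that for every $n\ge 0$ there is $v\in AV$ with $v(a)=f_a(s_0\cdots s_n)$ for all $a\in A$ and $s_{n+1}=\delta(s_n,v)$.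 $\mathbb{B}_4=\{1111,0111,0011,0001,0000\}$ is totally ordered by $1111\succ0111\succ0011\succ0001\succ0000$; for $b=b_1b_2b_3b_4\in\mathbb{B}_4$ and $k\in\{1,2,3,4\}$, $b[k]=b_k$; max and min on $\mathbb{B}_4$ refer to this order, and on bits to $0<1$. rATL formulas: state formulas $\varphi ::= p \mid \neg\varphi\mid\varphi\vee\varphi\mid\varphi\wedge\varphi\mid\varphi\to\varphi\mid\langle\!\langle A\rangle\!\rangle\Phi\mid[\![A]\!]\Phi$ and path formulas $\Phi::=\dot{\bigcirc}\varphi\mid\dot\Diamond\varphi\mid\dot\Box\varphi$, with $p\in\mathrm{AP}$ and $A$ a set of agents; an rATL formula is a state formula. On a CGS the valuation $V$ maps (state, state formula) and (path, path formula) pairs to $\mathbb{B}_4$: $V(s,p)=1111$ if $p\in\ell(s)$ and $0000$ otherwise; $V(s,\varphi_1\vee\varphi_2)=\max(V(s,\varphi_1),V(s,\varphi_2))$; $V(s,\varphi_1\wedge\varphi_2)=\min(V(s,\varphi_1),V(s,\varphi_2))$; $V(s,\neg\varphi)=0000$ if $V(s,\varphi)=1111$ and $1111$ otherwise; $V(s,\varphi_1\to\varphi_2)=1111$ if $V(s,\varphi_1)\preceq V(s,\varphi_2)$ and $V(s,\varphi_2)$ otherwise; $V(s,\langle\!\langle A\rangle\!\rangle\Phi)$ is the maximal $b\in\mathbb{B}_4$ such that there is a set $F_A$ of strategies (one per agent in $A$) with $V(\pi,\Phi)\succeq b$ for all $\pi\in out(s,F_A)$; $V(s,[\![A]\!]\Phi)$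 is the maximal $b\in\mathbb{B}_4$ such that for every such $F_A$ there is $\pi\in out(s,F_A)$ with $V(\pi,\Phi)\succeq b$. For paths: $V(\pi,\dot\bigcirc\varphi)[k]=V(\pi[1],\varphi)[k]$; $V(\pi,\dot\Diamond\varphi)[k]=\max_{i\ge0}V(\pi[i],\varphi)[k]$; $V(\pi,\dot\Box\varphi)=b_1b_2b_3b_4$ with $b_1=\min_{i\ge0}V(\pi[i],\varphi)[1]$, $b_2=\max_{i\ge0}\min_{j\ge i}V(\pi[j],\varphi)[2]$, $b_3=\min_{i\ge0}\max_{j\ge i}V(\pi[j],\varphi)[3]$, $b_4=\max_{i\ge0}V(\pi[i],\varphi)[4]$. ATL formulas: state formulas $\varphi::=p\mid\neg\varphi\mid\varphi\vee\varphi\mid\varphi\wedge\varphi\mid\varphi\to\varphi\mid\langle\!\langle A\rangle\!\rangle\Phi\mid[\![A]\!]\Phi$ and path formulas $\Phi::=\bigcirc\varphi\mid\Diamond\varphi\mid\Box\varphi$, with the standard Boolean semantics: $\mathcal{S},s\models p$ iff $p\in\ell(s)$; Boolean connectives as usual; $\mathcal{S},s\models\langle\!\langle A\rangle\!\rangle\Phi$ iff there is a set $F_A$ of strategies (one per agent in $A$) with $\mathcal{S},\pi\models\Phi$ for all $\pi\in out(s,F_A)$; $\mathcal{S},s\models[\![A]\!]\Phi$ iff for every such $F_A$ some $\pi\in out(s,F_A)$ satisfies $\mathcal{S},\pi\models\Phi$; $\mathcal{S},\pi\models\bigcirc\varphi$ iff $\mathcal{S},\pi[1]\models\varphi$; $\mathcal{S},\pi\models\Diamond\varphi$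 iff $\mathcal{S},\pi[i]\models\varphi$ for some $i\ge0$; $\mathcal{S},\pi\models\Box\varphi$ iff $\mathcal{S},\pi[i]\models\varphi$ for all $i\ge0$. *)

From mathcomp Require Import all_boot.
From mathcomp Require Import boolp.
Set Implicit Arguments. Unset Strict Implicit. Unset Printing Implicit Defensive.

Section Defs.
Variables (AP Ag : finType).

Record cgs := CGS {
  St : finType;
  Ac : finType;
  delta : St -> {ffun Ag -> Ac} -> St;
  lab : St -> {set AP}
}.

(* A set F_A of strategies, one for each agent in A.
   A history s_0 ... s_n (element of St^+) is represented by the list [:: s_0; ...; s_n]. *)
Definition strat_set (S : cgs) (A : {set Ag}) :=
  forall a : Ag, a \in A -> seq (St S) -> Ac S.

Definition prefix (S : cgs) (pi : nat -> St S) (n : nat) : seq (St S) :=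
  [seq pi i | i <- iota 0 n.+1].

Definition out (S : cgs) (A : {set Ag}) (s : St S) (F : strat_set S A)
    (pi : nat -> St S) : Prop :=
  pi 0 = s /\
  forall n, exists v : {ffun Ag -> Ac S},
    (forall (a : Ag) (h : a \in A), v a = F a h (prefix pi n)) /\
    pi n.+1 = delta (pi n) v.

(* ---------- Syntax (shared by ATL and rATL) ----------
   A path formula is a temporal operator applied to a state formula; in rATL
   these operators are read as the dotted (robust) ones. *)
Inductive temp := TNext | TEv | TAlw.

Inductive formula :=
| FAtom of AP
| FNeg of formula
| FOr of formula & formula
| FAnd of formula & formula
| FImp of formula & formula
| FEx of {set Ag} & temp & formula
| FAll of {set Ag} & temp & formula.

Definition psat (S : cgs) (k : temp) (P : St S -> Prop) (pi : nat -> St S) : Prop :=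
  match k with
  | TNext => P (pi 1)
  | TEv => exists i, P (pi i)
  | TAlw => forall i, P (pi i)
  end.

Fixpoint sat (S : cgs) (s : St S) (f : formula) {struct f} : Prop :=
  match f with
  | FAtom p => p \in lab s
  | FNeg g => ~ sat s g
  | FOr g h => sat s g \/ sat s h
  | FAnd g h => sat s g /\ sat s h
  | FImp g h => sat s g -> sat s h
  | FEx A k g => exists F : strat_set S A,
      forall pi, out s F pi -> psat k (fun t => sat t g) pi
  | FAll A k g => forall F : strat_set S A,
      exists pi, out s F pi /\ psat k (fun t => sat t g) pi
  end.

(* ---------- The truth values B_4 ----------
   B4 := 'I_5, where the element n encodes the 4-bit string with exactly n
   trailing ones:  0 = 0000, 1 = 0001, 2 = 0011, 3 = 0111, 4 = 1111.
   The total order 1111 > 0111 > 0011 > 0001 > 0000 is the order of 'I_5 (on nat). *)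
Definition B4 := 'I_5.
Definition b0000 : B4 := @Ordinal 5 0 isT.
Definition b0001 : B4 := @Ordinal 5 1 isT.
Definition b0011 : B4 := @Ordinal 5 2 isT.
Definition b0111 : B4 := @Ordinal 5 3 isT.
Definition b1111 : B4 := @Ordinal 5 4 isT.

Definition leB (b c : B4) : bool := (nat_of_ord b <= nat_of_ord c)%N.
Definition maxB (b c : B4) : B4 := if leB b c then c else b.
Definition minB (b c : B4) : B4 := if leB b c then b else c.

(* b[k] for k in {1,2,3,4} *)
Definition bit (b : B4) (k : nat) : bool := (5 - k <= nat_of_ord b)%N.

(* the element b1 b2 b3 b4 of B4, for a bit string with b1 <= b2 <= b3 <= b4
   (the only case in which it is used: all bit strings built below are of this form) *)
Definition of_bits (b1 b2 b3 b4 : bool) : B4 := inord (b1 + b2 + b3 + b4).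

(* maximum element of B4 satisfying P (0000 is the bottom element) *)
Definition maxsat (P : B4 -> Prop) : B4 :=
  inord (\max_(b : B4 | `[< P b >]) nat_of_ord b).

Definition pval (S : cgs) (k : temp) (g : St S -> B4) (pi : nat -> St S) : B4 :=
  match k with
  | TNext => g (pi 1)
  | TEv => of_bits
      `[< exists i, bit (g (pi i)) 1 >] `[< exists i, bit (g (pi i)) 2 >]
      `[< exists i, bit (g (pi i)) 3 >] `[< exists i, bit (g (pi i)) 4 >]
  | TAlw => of_bits
      `[< forall i, bit (g (pi i)) 1 >]
      `[< exists i, forall j, (i <= j)%N -> bit (g (pi j)) 2 >]
      `[< forall i, exists j, (i <= j)%N /\ bit (g (pi j)) 3 >]
      `[< exists i, bit (g (pi i)) 4 >]
  end.

Fixpoint rval (S : cgs) (s : St S) (f : formula) {struct f} : B4 :=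
  match f with
  | FAtom p => if p \in lab s then b1111 else b0000
  | FNeg g => if rval s g == b1111 then b0000 else b1111
  | FOr g h => maxB (rval s g) (rval s h)
  | FAnd g h => minB (rval s g) (rval s h)
  | FImp g h => if leB (rval s g) (rval s h) then b1111 else rval s h
  | FEx A k g => maxsat (fun b => exists F : strat_set S A,
      forall pi, out s F pi -> leB b (pval k (fun t => rval t g) pi))
  | FAll A k g => maxsat (fun b => forall F : strat_set S A,
      exists pi, out s F pi /\ leB b (pval k (fun t => rval t g) pi))
  end.

End Defs.

(* (i) Translating an ATL formula into rATL, with implication rewritten as
   "not g or h", gives a formula whose robust value is 1111 exactly where the
   ATL formula holds.  The key facts are that a strategic value is at least a
   nonzero threshold u iff the corresponding strategy property holds at level u
   (values are maxima of downward closed sets), and that a path has robust value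
   1111 iff its states have value 1111 in the Boolean temporal sense.

   (ii) psi = << {} >> (robust box) p has value at least 0111 at s iff p holds
   eventually forever on every path from s.  For a structure in which one agent
   a0 decides all moves, strategic quantifiers reduce to path quantifiers over
   the move graph.  On such a structure with states 0..2M (p at even states),
   from M every path settles at an even state, while from 2M a cycle through odd
   states exists.  By induction on formulas, ATL formulas of depth at most k do
   not distinguish states that are both at least k and of equal parity; taking
   M even and larger than the depth of a candidate ATL formula chi, chi cannot
   separate M from 2M although psi does. *)
From Pilot Require Import Defs.
From mathcomp Require Import all_boot boolp zify.
Set Implicit Arguments. Unset Strict Implicit. Unset Printing Implicit Defensive.

Lemma B4_le4 (b : B4) : (b <= 4)%N.
Proof. by case: b => /= m; rewrite ltnS. Qed.

Lemma eq_b1111 (b : B4) : b = b1111 <-> leB b1111 b.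
Proof.
split=> [-> //|le4b]; apply: val_inj => /=.
by apply/eqP; rewrite eqn_leq B4_le4.
Qed.

Lemma of_bitsE (b1 b2 b3 b4 : bool) :
  nat_of_ord (of_bits b1 b2 b3 b4) = (b1 + b2 + b3 + b4)%N.
Proof. by rewrite /of_bits inordK //; case: b1; case: b2; case: b3; case: b4. Qed.

Lemma leB_trans (a b c : B4) : leB a b -> leB b c -> leB a c.
Proof. exact: leq_trans. Qed.

Lemma maxsat_ge (P : B4 -> Prop) (u : B4) :
  (0 < u)%N -> (forall b c : B4, leB b c -> P c -> P b) ->
  leB u (maxsat P) <-> P u.
Proof.
move=> u_gt0 P_down; rewrite /leB /maxsat inordK; last first.
  by rewrite ltnS; apply/bigmax_leqP => b _; apply: B4_le4.
split=> [ge_u|Pu]; last first.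
  by apply: (@leq_bigmax_cond _ _ (fun b : B4 => nat_of_ord b) u); apply/asboolP.
have [[b [Pb le_ub]]|noP] := pselect (exists b : B4, P b /\ (u <= b)%N).
  exact: (P_down u b).
suff : (\max_(b : B4 | `[< P b >]) nat_of_ord b <= u.-1)%N by lia.
apply/bigmax_leqP => b /asboolP Pb; rewrite -ltnS prednK // ltnNge.
by apply/negP => le_ub; apply: noP; exists b.
Qed.

Section Valuation.
Variables (AP Ag : finType) (S : cgs AP Ag).

Lemma rval_FEx_ge (s : St S) A k g (u : B4) : (0 < u)%N ->
  leB u (rval s (FEx A k g)) <->
  exists F : strat_set S A, forall pi, out s F pi -> leB u (pval k (fun t => rval t g) pi).
Proof.
move=> u_gt0; apply: maxsat_ge => // b c le_bc [F HF].
by exists F => pi /HF; apply: leB_trans.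
Qed.

Lemma rval_FAll_ge (s : St S) A k g (u : B4) : (0 < u)%N ->
  leB u (rval s (FAll A k g)) <->
  forall F : strat_set S A, exists pi, out s F pi /\ leB u (pval k (fun t => rval t g) pi).
Proof.
move=> u_gt0; apply: maxsat_ge => // b c le_bc HF F.
by have [pi [Hpi le_c]] := HF F; exists pi; split=> //; apply: leB_trans le_c.
Qed.

Lemma psat_iff k (P Q : St S -> Prop) pi :
  (forall t, P t <-> Q t) -> psat k P pi <-> psat k Q pi.
Proof.
move=> PQ; case: k => /=; first exact: PQ.
- by split=> -[i /PQ]; exists i.
- by split=> Pi i; apply/PQ.
Qed.

Lemma pval_top k (g : St S -> B4) pi :
  leB b1111 (pval k g pi) <-> psat k (fun t => g t = b1111) pi.
Proof.
have bit_top (b : B4) j : b = b1111 -> (0 < j)%N -> bit b j by move=> -> j_gt0; rewrite /bit /=; lia.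
have sum4 (b1 b2 b3 b4 : bool) : (4 <= b1 + b2 + b3 + b4)%N = [&& b1, b2, b3 & b4].
  by case: b1; case: b2; case: b3; case: b4.
case: k => /=; first exact: iff_sym (eq_b1111 _).
- rewrite /leB of_bitsE sum4; split.
  + by case/and4P => /asboolP [i top_i] _ _ _; exists i; apply/eq_b1111.
  + by case=> i top_i; apply/and4P; split; apply/asboolP; exists i; apply: bit_top.
- rewrite /leB of_bitsE sum4; split.
  + by case/and4P => /asboolP top _ _ _ i; apply/eq_b1111; apply: top.
  + move=> top; apply/and4P; split; apply/asboolP.
    * by move=> i; apply: bit_top.
    * by exists 0 => j _; apply: bit_top.
    * by move=> i; exists i; split=> //; apply: bit_top.
    * by exists 0; apply: bit_top.
Qed.

End Valuation.

(* The translation of ATL into rATL: implication is the only connective whose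
   robust reading differs on values strictly between 0000 and 1111, so it is
   rewritten as a disjunction. *)
Fixpoint to_rATL (AP Ag : finType) (f : formula AP Ag) : formula AP Ag :=
  match f with
  | FAtom p => FAtom Ag p
  | FNeg g => FNeg (to_rATL g)
  | FOr g h => FOr (to_rATL g) (to_rATL h)
  | FAnd g h => FAnd (to_rATL g) (to_rATL h)
  | FImp g h => FOr (FNeg (to_rATL g)) (to_rATL h)
  | FEx A k g => FEx A k (to_rATL g)
  | FAll A k g => FAll A k (to_rATL g)
  end.

Lemma maxB_top (a b : B4) : maxB a b = b1111 <-> a = b1111 \/ b = b1111.
Proof. rewrite /maxB !eq_b1111 /leB; case: ifP; lia. Qed.

Lemma minB_top (a b : B4) : minB a b = b1111 <-> a = b1111 /\ b = b1111.
Proof. rewrite /minB !eq_b1111 /leB; case: ifP; lia. Qed.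

Lemma neg_top (a : B4) : (if a == b1111 then b0000 else b1111) = b1111 <-> a <> b1111.
Proof. by case: eqP. Qed.

Lemma to_rATL_correct (AP Ag : finType) (phi : formula AP Ag) (S : cgs AP Ag) (s : St S) :
  rval s (to_rATL phi) = b1111 <-> sat s phi.
Proof.
elim: phi s => [p|g IH|g IHg h IHh|g IHg h IHh|g IHg h IHh|A k g IH|A k g IH] s /=.
- by case: (p \in lab s); split=> // /(congr1 val).
- by rewrite neg_top IH.
- by rewrite maxB_top IHg IHh.
- by rewrite minB_top IHg IHh.
- rewrite maxB_top neg_top IHg IHh; split; first by case.
  by have [Hg|Hg] := pselect (sat s g) => gh; [right; apply: gh|left].
- rewrite eq_b1111 rval_FEx_ge //.
  by split=> -[F HF]; exists F => pi /HF; rewrite pval_top (psat_iff _ _ IH).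
- rewrite eq_b1111 rval_FAll_ge //.
  split=> HF F; have [pi [Hpi val_pi]] := HF F; exists pi; split=> //;
    by move: val_pi; rewrite pval_top (psat_iff _ _ IH).
Qed.

Section SingleController.
(* A game structure whose moves are decided by the single agent a0: the
   transition only depends on the action a0 chooses.  Then << A >> and [[ A ]]
   collapse to path quantifiers over the paths of the one-player graph of step:
   existential when a0 belongs to A, universal otherwise. *)
Variables (AP Ag : finType) (S : cgs AP Ag) (a0 : Ag)
  (step : St S -> Ac S -> St S) (c0 : Ac S).
Hypothesis deltaE : forall s v, delta s v = step s (v a0).

Definition cpath (pi : nat -> St S) : Prop := forall n, exists c, pi n.+1 = step (pi n) c.

Definition exists_path (s : St S) (R : (nat -> St S) -> Prop) : Prop :=
  exists pi, [/\ pi 0 = s, cpath pi & R pi].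

Definition forall_path (s : St S) (R : (nat -> St S) -> Prop) : Prop :=
  forall pi, pi 0 = s -> cpath pi -> R pi.

Lemma path_prefixS (pi : nat -> St S) n : Defs.prefix pi n.+1 = rcons (Defs.prefix pi n) (pi n.+1).
Proof. by rewrite /Defs.prefix -addn1 iotaD map_cat cats1. Qed.

Lemma size_path_prefix (pi : nat -> St S) n : size (Defs.prefix pi n) = n.+1.
Proof. by rewrite /Defs.prefix size_map size_iota. Qed.

Lemma last_path_prefix (pi : nat -> St S) x n : last x (Defs.prefix pi n) = pi n.
Proof. by case: n => [|n]; rewrite ?path_prefixS ?last_rcons. Qed.

Definition profile (A : {set Ag}) (F : strat_set S A) (h : seq (St S)) : {ffun Ag -> Ac S} :=
  [ffun a => if Bool.bool_dec (a \in A) true is left aA then F a aA h else c0].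

Lemma profileE A (F : strat_set S A) h a (aA : a \in A) : profile F h a = F a aA h.
Proof.
rewrite ffunE; case: Bool.bool_dec => [aA'|]; last by rewrite aA.
by rewrite (bool_irrelevance aA' aA).
Qed.

Lemma out_cpath A (F : strat_set S A) s pi : out s F pi -> cpath pi.
Proof. by case=> _ Hout n; have [v [_ ->]] := Hout n; exists (v a0). Qed.

Lemma out_exists A (F : strat_set S A) s : exists pi, out s F pi.
Proof.
pose fix hist n := if n is n'.+1 then
  rcons (hist n') (delta (last s (hist n')) (profile F (hist n'))) else [:: s].
pose pi n := last s (hist n).
have histE n : hist n = Defs.prefix pi n.
  by elim: n => [//|n IH] /=; rewrite path_prefixS -IH /pi /= last_rcons.
exists pi; split=> // n; exists (profile F (Defs.prefix pi n)); split.
- by move=> a aA; rewrite profileE.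
- by rewrite /pi /= last_rcons -histE.
Qed.

Lemma cpath_out A (F : strat_set S A) s pi :
  a0 \notin A -> pi 0 = s -> cpath pi -> out s F pi.
Proof.
move=> a0A pi0 Hpi; split=> // n; have [c pic] := Hpi n.
exists [ffun a => if a == a0 then c else profile F (Defs.prefix pi n) a]; split.
- move=> a aA; rewrite ffunE; case: eqP => [a_a0|_]; last exact: profileE.
  by move: a0A; rewrite -a_a0 aA.
- by rewrite deltaE ffunE eqxx.
Qed.

Lemma cpath_strat (A : {set Ag}) s pi : a0 \in A -> pi 0 = s -> cpath pi ->
  exists F : strat_set S A, forall pi', out s F pi' -> pi' = pi.
Proof.
move=> a0A pi0 Hpi.
exists (fun a _ h => odflt c0 [pick c | step (last s h) c == pi (size h)]).
move=> pi' [pi'0 Hout]; apply: funext => n; elim: n {-2}n (leqnn n) => [|n IH] i.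
  by rewrite leqn0 => /eqP ->; rewrite pi'0 pi0.
rewrite leq_eqVlt => /orP [/eqP ->|]; last exact: IH.
have [v [Hv ->]] := Hout n; rewrite deltaE (Hv a0 a0A) size_path_prefix last_path_prefix IH //.
case: pickP => [c /eqP -> //|no_c].
by have [c pic] := Hpi n; move: (no_c c); rewrite pic eqxx.
Qed.

Lemma strat_ex_path (A : {set Ag}) s R :
  (exists F : strat_set S A, forall pi, out s F pi -> R pi) <->
  (if a0 \in A then exists_path s R else forall_path s R).
Proof.
case: ifP => a0A.
- split=> [[F HF]|[pi [pi0 Hpi Rpi]]].
  + have [pi Hout] := out_exists F s; exists pi; split; [by case: Hout|exact: out_cpath Hout|exact: HF].
  + by have [F forces_pi] := cpath_strat a0A pi0 Hpi; exists F => pi' /forces_pi ->.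
- split=> [[F HF] pi pi0 Hpi|HR].
  + by apply: HF; apply: cpath_out; rewrite ?a0A.
  + exists (fun _ _ _ => c0) => pi Hout; apply: HR; [by case: Hout|exact: out_cpath Hout].
Qed.

Lemma strat_all_path (A : {set Ag}) s R :
  (forall F : strat_set S A, exists pi, out s F pi /\ R pi) <->
  (if a0 \in A then forall_path s R else exists_path s R).
Proof.
case: ifP => a0A.
- split=> [HF pi pi0 Hpi|HR F].
  + have [F forces_pi] := cpath_strat a0A pi0 Hpi.
    by have [pi' [/forces_pi ->]] := HF F.
  + have [pi Hout] := out_exists F s; exists pi; split=> //.
    by apply: HR; [case: Hout|exact: out_cpath Hout].
- split=> [HF|[pi [pi0 Hpi Rpi]] F].
  + have [pi [Hout Rpi]] := HF (fun _ _ _ => c0).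
    by exists pi; split=> //; [case: Hout|exact: out_cpath Hout].
  + by exists pi; split=> //; apply: cpath_out; rewrite ?a0A.
Qed.

End SingleController.

(* Robust value at least 0111 for "always" means: from some point on, the second
   bit holds forever (the bits of B4 are monotone, so the first bit implies
   the second and the second the third and fourth). *)
Lemma pval_alw_ge0111 (AP Ag : finType) (S : cgs AP Ag) (g : St S -> B4) pi :
  leB b0111 (pval TAlw g pi) <-> exists i, forall j, (i <= j)%N -> bit (g (pi j)) 2.
Proof.
have bit_mono (b : B4) j : (0 < j)%N -> bit b j -> bit b j.+1 by rewrite /bit; lia.
have ge3 (b1 b2 b3 b4 : bool) :
  b1 ==> b2 -> b2 ==> b3 -> b3 ==> b4 -> (3 <= b1 + b2 + b3 + b4)%N = b2.
  by case: b1; case: b2; case: b3; case: b4.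
rewrite /leB of_bitsE /= ge3; first by split=> /asboolP.
- apply/implyP => /asboolP bit1; apply/asboolP.
  by exists 0 => j _; apply: bit_mono.
- apply/implyP => /asboolP [i bit2]; apply/asboolP => i'.
  exists (maxn i i'); split; first exact: leq_maxr.
  by apply: bit_mono => //; apply: bit2; apply: leq_maxl.
- apply/implyP => /asboolP bit3; apply/asboolP.
  by have [j [_ bit3j]] := bit3 0; exists j; apply: bit_mono.
Qed.

Definition dual (t : temp) : temp :=
  match t with TNext => TNext | TEv => TAlw | TAlw => TEv end.

Lemma psat_dual (AP Ag : finType) (S : cgs AP Ag) t (Q : St S -> Prop) pi :
  ~ psat t Q pi <-> psat (dual t) (fun z => ~ Q z) pi.
Proof.
case: t => /=; first by [].
- by split=> [noQ i Qi|noQ [i]]; [apply: noQ; exists i|apply: noQ].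
- split=> [notall|[i noQ] allQ]; last exact: noQ.
  by apply: contrapT => noex; apply: notall => i; apply: contrapT => noQ; apply: noex; exists i.
Qed.

Fixpoint depth (AP Ag : finType) (f : formula AP Ag) : nat :=
  match f with
  | FAtom _ => 0
  | FNeg g => depth g
  | FOr g h | FAnd g h | FImp g h => maxn (depth g) (depth h)
  | FEx _ _ g | FAll _ _ g => (depth g).+1
  end.

Lemma nonincreasing_stable (f : nat -> nat) : (forall n, f n.+1 <= f n)%N ->
  exists i, forall j, (i <= j)%N -> f j = f i.
Proof.
move=> f_dec; have f_mono : {homo f : m n / (m <= n)%N >-> (n <= m)%N}.
  by apply: homo_leq => // a b c ba cb; apply: leq_trans ba.
have ex_val : exists n, `[< exists i, f i = n >] by exists (f 0); apply/asboolP; exists 0.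
case: (ex_minnP ex_val) => m /asboolP [i fi] m_min.
exists i => j le_ij; apply/eqP; rewrite eqn_leq f_mono // fi m_min //.
by apply/asboolP; exists j.
Qed.

Definition robust_box (AP Ag : finType) (p : AP) : formula AP Ag := FEx set0 TAlw (FAtom Ag p).

Section Model.
(* For an even M the structure below has states 0, ..., 2M, with p true exactly
   at even states, and a single agent a0 deciding the moves: from every state
   one may step down by one (0 stays at 0), an even state may stay put, and the
   odd state M+1 may jump to the top 2M.  From M all paths descend and settle in
   an even state, whereas from 2M the cycle 2M, 2M-1, ..., M+1, 2M visits odd
   states forever.  Yet ATL formulas of depth at most M do not tell M and 2M apart. *)
Variables (AP Ag : finType) (p : AP) (a0 : Ag) (M : nat).
Hypothesis M_even : ~~ odd M.

Definition peak : nat := (M + M)%N.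

Definition next (j : nat) (b : bool) : nat :=
  if b then (if odd j then (if j == M.+1 then peak else j.-1) else j) else j.-1.

Local Notation state := 'I_peak.+1.

Definition mstep (s : state) (b : bool) : state := inord (next s b).
Definition mlab (s : state) : {set AP} := if odd s then set0 else [set p].
Definition model : cgs AP Ag := @CGS AP Ag state bool (fun s v => mstep s (v a0)) mlab.

Local Notation mpath := (@cpath AP Ag model mstep).
Local Notation Epath := (@exists_path AP Ag model mstep).
Local Notation Apath := (@forall_path AP Ag model mstep).
Local Notation msat := (@sat AP Ag model).
Local Notation mpsat := (@psat AP Ag model).

Lemma next_le_peak j b : (j <= peak)%N -> (next j b <= peak)%N.
Proof. by rewrite /next /peak; case: b; repeat case: ifP => ?; lia. Qed.

Lemma next_ge j b : (j.-1 <= next j b)%N.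
Proof. by rewrite /next /peak; case: b; repeat case: ifP => [/eqP ?|?]; lia. Qed.

Lemma next_le j b : j <> M.+1 -> (next j b <= j)%N.
Proof. by rewrite /next; case: b; repeat case: ifP => [/eqP ?|?]; lia. Qed.

Lemma next_odd j b : odd j -> ~~ odd (next j b).
Proof. by rewrite /next /peak; case: b; repeat case: ifP => ?; lia. Qed.

Lemma mstepE (s : state) b : nat_of_ord (mstep s b) = next s b.
Proof. by rewrite inordK // ltnS next_le_peak // -ltnS. Qed.

Lemma mpathP pi : mpath pi <-> forall n, exists b, nat_of_ord (pi n.+1) = next (pi n) b.
Proof.
split=> Hpi n; have [b Hb] := Hpi n; exists b; first by rewrite Hb mstepE.
by apply: val_inj; rewrite /= mstepE.
Qed.

Definition descend (y : state) (c j : nat) : state := inord (y - minn j c).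

Lemma descendE (y : state) c j : nat_of_ord (descend y c j) = (y - minn j c)%N.
Proof. by rewrite inordK // ltnS; apply: leq_trans (leq_subr _ _) _; rewrite -ltnS. Qed.

Lemma descend0 (y : state) c : descend y c 0 = y.
Proof. by rewrite /descend min0n subn0 inord_val. Qed.

Lemma descend_path (y : state) c : ~~ odd (y - c) -> mpath (descend y c).
Proof.
move=> stop_even; apply/mpathP => n; rewrite !descendE.
have [lt_nc|le_cn] := ltnP n c.
- by exists false; rewrite /next (minn_idPl lt_nc); lia.
- by exists true; rewrite (minn_idPr (leqW le_cn)) /next (negbTE stop_even).
Qed.

Lemma descend_full (y : state) j : (j <= y)%N -> nat_of_ord (descend y y j) = (y - j)%N.
Proof. by move=> le_jy; rewrite descendE (minn_idPl le_jy). Qed.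

(* rel k x y: x and y agree on ATL formulas of depth at most k (proved below);
   they are equal, or both at least k and of the same parity. *)
Definition rel (k : nat) (x y : state) : Prop :=
  x = y \/ [/\ (k <= x)%N, (k <= y)%N & odd x = odd y].

Lemma rel_sym k x y : rel k x y -> rel k y x.
Proof. by case=> [->|[kx ky xy]]; [left|right]. Qed.

Section Transfer.
Variables (k : nat) (Q : state -> Prop) (x y : state).
Hypotheses (k_gt0 : (0 < k)%N) (Q_inv : forall u v, rel k.-1 u v -> Q u -> Q v)
  (k_le_x : (k <= x)%N) (k_le_y : (k <= y)%N) (parity_xy : odd x = odd y).

Lemma Q_far (u v : state) : (k.-1 <= u)%N -> (k.-1 <= v)%N -> odd u = odd v -> Q u -> Q v.
Proof. by move=> ku kv uv; apply: Q_inv; right. Qed.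

(* The successor of x is far; from y a far successor of either parity is
   available (staying is possible only at an even y, but then x is even too). *)
Lemma transfer_next : Epath x (mpsat TNext Q) -> Epath y (mpsat TNext Q).
Proof.
case=> pi [pi0 /mpathP Hpi /= Q1]; have [b pi1] := Hpi 0; rewrite pi0 in pi1.
have k_pi1 : (k.-1 <= pi 1)%N by rewrite pi1; apply: leq_trans (next_ge _ _); lia.
have [same|diff] := eqVneq (odd (pi 1)) (odd y).
- have y_even : ~~ odd y by apply/negP => y_odd; have := @next_odd x b; rewrite -pi1; lia.
  exists (descend y 0); split; [exact: descend0|by apply: descend_path; rewrite subn0|].
  by apply: (Q_far k_pi1 _ _ Q1); rewrite descendE minn0 subn0 //; lia.
- exists (descend y y); split; [exact: descend0|by apply: descend_path; rewrite subnn|].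
  by apply: (Q_far k_pi1 _ _ Q1); rewrite descend_full; lia.
Qed.

(* The full descent from y visits y and y-1 (both far, of both parities) and
   then every state below k-1. *)
Lemma transfer_ev : Epath x (mpsat TEv Q) -> Epath y (mpsat TEv Q).
Proof.
case=> pi [pi0 Hpi [i Qi]].
exists (descend y y); split; [exact: descend0|by apply: descend_path; rewrite subnn|].
have [k_pi|pi_k] := leqP k.-1 (pi i).
- have [same|diff] := eqVneq (odd (pi i)) (odd y).
  + by exists 0; apply: (Q_far k_pi _ _ Qi); rewrite ?descend0 //; lia.
  + by exists 1; apply: (Q_far k_pi _ _ Qi); rewrite descend_full; lia.
- exists (y - pi i)%N; suff -> : descend y y (y - pi i) = pi i by [].
  by apply: val_inj; rewrite /= descend_full; lia.
Qed.

(* Only the first two states of the path from x are needed: if x is even, stay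
   at y forever; if x is odd, its successor is even and far, so step from y
   to y-1 and stay there. *)
Lemma transfer_alw : Epath x (mpsat TAlw Q) -> Epath y (mpsat TAlw Q).
Proof.
case=> pi [pi0 /mpathP Hpi /= Qpi].
have Qy : Q y by apply: (Q_far _ _ _ (Qpi 0)); rewrite ?pi0; lia.
case x_odd: (odd x).
- have [b pi1] := Hpi 0; rewrite pi0 in pi1.
  have pi1_even := next_odd b x_odd; rewrite -pi1 in pi1_even.
  have k_pi1 : (k.-1 <= pi 1)%N by rewrite pi1; apply: leq_trans (next_ge _ _); lia.
  exists (descend y 1); split; first exact: descend0.
    by apply: descend_path; lia.
  case=> [|j]; first by rewrite descend0.
  by apply: (Q_far k_pi1 _ _ (Qpi 1)); rewrite descendE (minn_idPr _); lia.
- exists (descend y 0); split; first exact: descend0.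
    by apply: descend_path; rewrite subn0 -parity_xy x_odd.
  by move=> j; suff -> : descend y 0 j = y by []; apply: val_inj; rewrite /= descendE minn0 subn0.
Qed.

Lemma transfer t : Epath x (mpsat t Q) -> Epath y (mpsat t Q).
Proof. by case: t; [exact: transfer_next|exact: transfer_ev|exact: transfer_alw]. Qed.

End Transfer.

Lemma Epath_rel k (Q : state -> Prop) t x y : (0 < k)%N ->
  (forall u v, rel k.-1 u v -> Q u -> Q v) -> rel k x y ->
  Epath x (mpsat t Q) -> Epath y (mpsat t Q).
Proof. by move=> k_gt0 Q_inv [<- //|[kx ky xy]]; apply: (transfer k_gt0 Q_inv kx ky xy). Qed.

(* The universal case follows by duality, transferring a counterexample back. *)
Lemma Apath_rel k (Q : state -> Prop) t x y : (0 < k)%N ->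
  (forall u v, rel k.-1 u v -> Q u -> Q v) -> rel k x y ->
  Apath x (mpsat t Q) -> Apath y (mpsat t Q).
Proof.
move=> k_gt0 Q_inv r_xy all_x pi pi0 Hpi; apply: contrapT => /psat_dual notQ.
have notQ_inv u v : rel k.-1 u v -> ~ Q u -> ~ Q v.
  by move=> /rel_sym r_vu notQu /(Q_inv _ _ r_vu).
have [pi' [pi'0 Hpi' notQ']] :=
  Epath_rel k_gt0 notQ_inv (rel_sym r_xy) (ex_intro _ pi (And3 pi0 Hpi notQ)).
exact: (psat_dual _ _ _).2 notQ' (all_x pi' pi'0 Hpi').
Qed.

Lemma model_ex (A : {set Ag}) s R :
  (exists F : strat_set model A, forall pi, out s F pi -> R pi) <->
  (if a0 \in A then Epath s R else Apath s R).
Proof. exact: (strat_ex_path (S := model) false (fun _ _ => erefl)). Qed.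

Lemma model_all (A : {set Ag}) s R :
  (forall F : strat_set model A, exists pi, out s F pi /\ R pi) <->
  (if a0 \in A then Apath s R else Epath s R).
Proof. exact: (strat_all_path (S := model) false (fun _ _ => erefl)). Qed.

Theorem depth_invariance (phi : formula AP Ag) k (x y : state) :
  (depth phi <= k)%N -> rel k x y -> msat x phi <-> msat y phi.
Proof.
elim: phi k x y => [q|g IH|g IHg h IHh|g IHg h IHh|g IHg h IHh|A t g IH|A t g IH] k x y /= d_k r_xy.
- by case: r_xy => [->|[_ _ xy]] //; rewrite /mlab xy.
- by rewrite (IH k x y).
- by move: d_k; rewrite geq_max => /andP [dg dh]; rewrite (IHg k x y) // (IHh k x y).
- by move: d_k; rewrite geq_max => /andP [dg dh]; rewrite (IHg k x y) // (IHh k x y).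
- by move: d_k; rewrite geq_max => /andP [dg dh]; rewrite (IHg k x y) // (IHh k x y).
- have k_gt0 : (0 < k)%N by apply: leq_trans d_k.
  have Q_inv u v : rel k.-1 u v -> msat u g -> msat v g by move=> r; apply: (IH k.-1 u v _ r).1; lia.
  rewrite !model_ex; case: ifP => _; split.
  + exact: Epath_rel r_xy.
  + exact: Epath_rel (rel_sym r_xy).
  + exact: Apath_rel r_xy.
  + exact: Apath_rel (rel_sym r_xy).
- have k_gt0 : (0 < k)%N by apply: leq_trans d_k.
  have Q_inv u v : rel k.-1 u v -> msat u g -> msat v g by move=> r; apply: (IH k.-1 u v _ r).1; lia.
  rewrite !model_all; case: ifP => _; split.
  + exact: Apath_rel r_xy.
  + exact: Apath_rel (rel_sym r_xy).
  + exact: Epath_rel r_xy.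
  + exact: Epath_rel (rel_sym r_xy).
Qed.

Definition eventually_even (pi : nat -> state) : Prop :=
  exists i, forall j, (i <= j)%N -> ~~ odd (pi j).

Lemma robust_box_ge0111 (s : state) :
  leB b0111 (@rval AP Ag model s (robust_box Ag p)) <-> Apath s eventually_even.
Proof.
have bit_p (z : state) : bit (@rval AP Ag model z (FAtom Ag p)) 2 = ~~ odd z.
  by rewrite /= /mlab; case: (odd z); rewrite ?in_set0 ?in_set1 ?eqxx.
rewrite rval_FEx_ge // model_ex in_set0.
by split=> all_pi pi pi0 Hpi; have := all_pi pi pi0 Hpi; rewrite pval_alw_ge0111;
  case=> i Hi; exists i => j /Hi; rewrite bit_p.
Qed.

(* From M no path can climb back above M, so every path is eventually constant,
   necessarily at an even state. *)
Lemma low_start_settles : Apath (inord M) eventually_even.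
Proof.
move=> pi pi0 /mpathP Hpi.
have pi_le_M n : (pi n <= M)%N.
  elim: n => [|n IH]; first by rewrite pi0 inordK // ltnS /peak leq_addr.
  by have [b ->] := Hpi n; apply: leq_trans (next_le _ _) (IH); lia.
have pi_dec n : (pi n.+1 <= pi n)%N.
  by have [b ->] := Hpi n; apply: next_le; have := pi_le_M n; lia.
have [i stable] := nonincreasing_stable pi_dec.
exists i => j le_ij; rewrite (stable j le_ij); have [b pi_next] := Hpi i.
apply/negP => odd_i; have := next_odd b odd_i.
by rewrite -pi_next (stable i.+1 (leqnSn i)) odd_i.
Qed.

Definition cycle_step (j : nat) : nat := if j == M.+1 then peak else j.-1.

Lemma cycle_step_range j : (0 < M)%N -> (M.+1 <= j <= peak)%N ->
  (M.+1 <= cycle_step j <= peak)%N.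
Proof. by rewrite /cycle_step /peak; case: eqP => [->|]; lia. Qed.

(* Following the cycle from 2M, odd states recur forever. *)
Lemma high_start_escapes : (0 < M)%N -> ~ Apath (inord peak) eventually_even.
Proof.
move=> M_gt0 settles.
have cyc_range j : (M.+1 <= iter j cycle_step peak <= peak)%N.
  elim: j => [|j IH]; first by rewrite /= /peak; lia.
  by rewrite iterS; apply: cycle_step_range.
pose pi j : state := inord (iter j cycle_step peak).
have piE j : nat_of_ord (pi j) = iter j cycle_step peak.
  by rewrite inordK // ltnS; case/andP: (cyc_range j).
have M1_odd : odd M.+1 by rewrite /= M_even.
have pi_path : mpath pi.
  apply/mpathP => n; exists (iter n cycle_step peak == M.+1); rewrite !piE /= /cycle_step /next.
  by case: eqP => [->|_] //; rewrite M1_odd.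
have [i even_from_i] := settles pi erefl pi_path.
move: (even_from_i i (leqnn i)) (even_from_i i.+1 (leqnSn i)) (cyc_range i).
by rewrite !piE /= /cycle_step; case: eqP => [->|_]; [rewrite M1_odd|lia].
Qed.

Lemma robust_box_not_ATL (chi : formula AP Ag) : (0 < M)%N -> (depth chi <= M)%N ->
  ~ (forall s : state, msat s chi <-> leB b0111 (@rval AP Ag model s (robust_box Ag p))).
Proof.
move=> M_gt0 d_M chi_def.
have r : rel (depth chi) (inord M) (inord peak).
  have valM : nat_of_ord (inord M : state) = M by rewrite inordK // ltnS /peak leq_addr.
  by right; rewrite valM inordK /peak //; split; lia.
apply: high_start_escapes => //; apply/robust_box_ge0111/chi_def.
by apply/(depth_invariance (leqnn _) r)/chi_def/robust_box_ge0111; apply: low_start_settles.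
Qed.

End Model.

Theorem theorem3 (AP Ag : finType) :
  (forall phi : formula AP Ag, exists phis : formula AP Ag,
     forall (S : cgs AP Ag) (s : St S), rval s phis = b1111 <-> sat s phi)
  /\
  (inhabited AP -> inhabited Ag ->
   exists (psi : formula AP Ag) (u : B4),
     ~ exists chi : formula AP Ag,
         forall (S : cgs AP Ag) (s : St S), sat s chi <-> leB u (rval s psi)).
Proof.
split.
- by move=> phi; exists (to_rATL phi) => S s; apply: to_rATL_correct.
- case=> p [a0]; exists (robust_box Ag p), b0111; case=> chi chi_def.
  pose M := (depth chi).+1.*2.
  have M_even : ~~ odd M by rewrite odd_double.
  apply: (@robust_box_not_ATL AP Ag p a0 M M_even chi); [lia|lia|].
  by move=> s; apply: chi_def.
Qed.
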